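(* Let $(X,\to)$ be a transition system over $A$. For every equivalence relation $R$ on $X$ and $x_1,x_2\in X$: $(x_1,x_2)\in\beta_b(R)$ iff for all $a\in A$, every $y_1\in\delta_a(x_1)$ has some $y_2\in\delta_a(x_2)$ with $y_1\mathrel Ry_2$, and every $y_2\in\delta_a(x_2)$ has some $y_1\in\delta_a(x_1)$ with $y_1\mathrel Ry_2$.
   Context: $\delta_a(x)=\{x'\mid x\xrightarrow{a}x'\}$; $\Diamond_a(S)=\{x\mid\exists x'\in S\colon x\xrightarrow{a}x'\}$. $\alpha_b(\mathcal S)=\{(x,x')\mid\forall S\in\mathcal S\colon(x\in S\iff x'\in S)\}$, $\gamma_b(R)=\{S\subseteq X\mid\forall(x,x')\in R\colon(x\in S\iff x'\in S)\}$; $\mathit{lo}_b(\mathcal S)=\bigcup_{a\in A}\{\Diamond_a(S)\mid S\in\mathrm{cl}^{\cup,\lnot}_f(\mathcal S)\}$ with $\mathrm{cl}^{\cup,\lnot}_f$ the closure under finite unions and complement; $\beta_b=\alpha_b\circ\mathit{lo}_b\circ\gamma_b$ (on equivalences on $X$). *)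

From Stdlib Require Import RelationClasses.

Section Defs.
Variables (X A : Type) (trans : X -> A -> X -> Prop).

Definition delta (a : A) (x : X) : X -> Prop := fun x' => trans x a x'.

Definition Diam (a : A) (S : X -> Prop) : X -> Prop :=
  fun x => exists x', S x' /\ trans x a x'.

Definition alpha_b (SS : (X -> Prop) -> Prop) : X -> X -> Prop :=
  fun x x' => forall S, SS S -> (S x <-> S x').

Definition gamma_b (R : X -> X -> Prop) : (X -> Prop) -> Prop :=
  fun S => forall x x', R x x' -> (S x <-> S x').

(* closure under finite unions (including the empty union) and complement,
   taken extensionally (sets equal when they have the same elements) *)
Inductive cl_fin (SS : (X -> Prop) -> Prop) : (X -> Prop) -> Prop :=
| cl_base : forall S, SS S -> cl_fin SS S
| cl_empty : cl_fin SS (fun _ => False)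
| cl_union : forall S T, cl_fin SS S -> cl_fin SS T -> cl_fin SS (fun x => S x \/ T x)
| cl_compl : forall S, cl_fin SS S -> cl_fin SS (fun x => ~ S x)
| cl_ext : forall S T, cl_fin SS S -> (forall x, S x <-> T x) -> cl_fin SS T.

Definition lo_b (SS : (X -> Prop) -> Prop) : (X -> Prop) -> Prop :=
  fun T => exists a S, cl_fin SS S /\ (forall x, T x <-> Diam a S x).

Definition beta_b (R : X -> X -> Prop) : X -> X -> Prop :=
  alpha_b (lo_b (gamma_b R)).

End Defs.

(* Every set of [gamma_b R] is R-saturated, and saturation survives finite
   unions and complements; so whether [x] lies in [Diam a S] depends only on
   the R-classes of its a-successors, which gives the backward direction
   (for any relation R).  Conversely, for an equivalence R each class [R y] is
   itself in [gamma_b R], and the sets [Diam a (R y)] single out, for each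
   a-successor of [x1], a matching successor of [x2]. *)
From Stdlib Require Import Program.Basics RelationClasses Setoid.

Section Bisimulation.
Variables (X A : Type) (trans : X -> A -> X -> Prop).

Definition transfer (R : X -> X -> Prop) (a : A) (x1 x2 : X) : Prop :=
  forall y1, delta X A trans a x1 y1 ->
    exists y2, delta X A trans a x2 y2 /\ R y1 y2.

Lemma transfer_flip (R : X -> X -> Prop) `{Symmetric X R} a x1 x2 :
  transfer R a x1 x2 -> transfer (flip R) a x1 x2.
Proof.
  intros Htr y1 Hy1.
  destruct (Htr y1 Hy1) as [y2 [Hy2 Hr]].
  exists y2; split; [exact Hy2 | symmetry; exact Hr].
Qed.

Lemma gamma_b_cl_fin (R : X -> X -> Prop) S :
  cl_fin X (gamma_b X R) S -> gamma_b X R S.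
Proof.
  induction 1 as [S HS | | S T _ IHS _ IHT | S _ IHS | S T _ IHS HST];
    intros x x' Hr.
  - exact (HS x x' Hr).
  - tauto.
  - specialize (IHS x x' Hr); specialize (IHT x x' Hr); tauto.
  - specialize (IHS x x' Hr); tauto.
  - rewrite <- !HST; exact (IHS x x' Hr).
Qed.

Lemma gamma_b_flip (R : X -> X -> Prop) S :
  gamma_b X R S -> gamma_b X (flip R) S.
Proof. intros HS x x' Hr; symmetry; exact (HS x' x Hr). Qed.

Lemma gamma_b_class (R : X -> X -> Prop) `{Symmetric X R} `{Transitive X R} y :
  gamma_b X R (R y).
Proof.
  intros u v Huv; split; intro Hyu.
  - transitivity u; assumption.
  - transitivity v; [assumption | symmetry; assumption].
Qed.

Lemma alpha_b_sym SS x1 x2 : alpha_b X SS x1 x2 -> alpha_b X SS x2 x1.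
Proof. intros H S HS; symmetry; exact (H S HS). Qed.

Lemma Diam_transfer (R : X -> X -> Prop) a S x1 x2 :
  transfer R a x1 x2 -> gamma_b X R S ->
  Diam X A trans a S x1 -> Diam X A trans a S x2.
Proof.
  intros Htr HS [y1 [Hy1 Ht1]].
  destruct (Htr y1 Ht1) as [y2 [Ht2 Hr]].
  exists y2; split; [exact (proj1 (HS y1 y2 Hr) Hy1) | exact Ht2].
Qed.

Lemma transfer_beta_b (R : X -> X -> Prop) x1 x2 :
  (forall a, transfer R a x1 x2 /\ transfer (flip R) a x2 x1) ->
  beta_b X A trans R x1 x2.
Proof.
  intros Htr T [a [S [Hcl HT]]].
  pose proof (gamma_b_cl_fin R S Hcl) as HS.
  destruct (Htr a) as [H12 H21].
  rewrite !HT; split.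
  - exact (Diam_transfer R a S x1 x2 H12 HS).
  - exact (Diam_transfer (flip R) a S x2 x1 H21 (gamma_b_flip R S HS)).
Qed.

Lemma beta_b_transfer (R : X -> X -> Prop) `{Equivalence X R} a x1 x2 :
  beta_b X A trans R x1 x2 -> transfer R a x1 x2.
Proof.
  intros Hb y1 Hy1.
  assert (Hlo : lo_b X A trans (gamma_b X R) (Diam X A trans a (R y1))).
  { exists a, (R y1); split.
    - apply cl_base; exact (gamma_b_class R y1).
    - intro x; reflexivity. }
  assert (Hx1 : Diam X A trans a (R y1) x1).
  { exists y1; split; [reflexivity | exact Hy1]. }
  destruct (proj1 (Hb _ Hlo) Hx1) as [y2 [Hr Hy2]].
  exists y2; split; assumption.
Qed.

End Bisimulation.

Theorem mainTheorem10 (X A : Type) (trans : X -> A -> X -> Prop)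
  (R : X -> X -> Prop) (HR : Equivalence R) (x1 x2 : X) :
  beta_b X A trans R x1 x2 <->
  (forall a : A,
     (forall y1, delta X A trans a x1 y1 ->
        exists y2, delta X A trans a x2 y2 /\ R y1 y2) /\
     (forall y2, delta X A trans a x2 y2 ->
        exists y1, delta X A trans a x1 y1 /\ R y1 y2)).
Proof.
  split.
  - intros Hb a; split.
    + exact (beta_b_transfer X A trans R a x1 x2 Hb).
    + apply (transfer_flip X A trans R a x2 x1).
      exact (beta_b_transfer X A trans R a x2 x1 (alpha_b_sym X _ x1 x2 Hb)).
  - exact (transfer_beta_b X A trans R x1 x2).
Qed.
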